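(* Let $(M,\rho)$ be a metric space, let $f,g:M\to\mathbb{R}\cup\{+\infty\}$, and let $\lambda\in\mathbb{R}$ be such that $L_\lambda(f-g)\cap\operatorname{dom} f\cap\operatorname{dom} g\neq\varnothing$. Let $M_1:=L_\lambda(f-g)$ and $f_1:=f|_{M_1}$, regarded as a function on the metric space $(M_1,\rho)$. If $x\in M_1\cap\operatorname{dom} g$ satisfies $|\nabla f|(x)>|\nabla g|(x)$, then $|\nabla f_1|(x)=|\nabla f|(x)$.
   Context: Functions take values in $\mathbb{R}\cup\{+\infty\}$; $\operatorname{dom} f:=\{x:f(x)<+\infty\}$; the expression $\infty-\infty$ is undefined. For $\lambda\in\mathbb{R}$, $L_\lambda(f-g):=\{x\in\operatorname{dom} f:\ f(x)-g(x)\le\lambda\}$ (where $f(x)-g(x)=-\infty$ if $g(x)=+\infty$). $[t]^+:=\max\{0,t\}$, with $[f(x)-f(y)]^+:=0$ if $f(y)=+\infty$. For $x\in\operatorname{dom} f$, the local slope is $|\nabla f|(x):=\limsup_{y\to x,\,y\neq x}\frac{[f(x)-f(y)]^+}{\rho(x,y)}\in[0,+\infty]$ (equal to $0$ at isolated points); for a restriction to a subset, the slope is computed in the subspace metric, i.e. with $y$ ranging over the subset. *)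

From Stdlib Require Import Reals.
From Coquelicot Require Import Coquelicot.
Open Scope R_scope.

Record MetricSpace := {
  mcarrier :> Type;
  mdist : mcarrier -> mcarrier -> R;
  mdist_ge0 : forall x y, 0 <= mdist x y;
  mdist_eq0 : forall x y, mdist x y = 0 <-> x = y;
  mdist_sym : forall x y, mdist x y = mdist y x;
  mdist_tri : forall x y z, mdist x z <= mdist x y + mdist y z }.

(* Values in R ∪ {+oo}: [Some r] is the real r, [None] is +oo. *)
Definition ERfun (M : MetricSpace) := M -> option R.

Definition dom {M : MetricSpace} (f : ERfun M) (x : M) : Prop := f x <> None.

(* L_lambda(f - g) = { x in dom f : f x - g x <= lambda },
   with f x - g x = -oo when g x = +oo. *)
Definition sublevel {M : MetricSpace} (f g : ERfun M) (lam : R) (x : M) : Prop :=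
  match f x, g x with
  | Some a, Some b => a - b <= lam
  | Some _, None => True
  | None, _ => False
  end.

(* [a - f y]^+ with the convention [a - (+oo)]^+ = 0. *)
Definition pos_diff (a : R) (b : option R) : R :=
  match b with Some r => Rmax 0 (a - r) | None => 0 end.

(* Local slope of f restricted to the subset S (subspace metric) at x in dom f:
   limsup_{y -> x, y in S, y <> x} [f x - f y]^+ / rho(x,y)
   = inf_{delta > 0} sup { [f x - f y]^+ / rho(x,y) : y in S, y <> x, rho(x,y) < delta },
   with value 0 at isolated points.  Since all quotients are >= 0, adding 0 to each
   supremum does not change the limsup at non-isolated points and yields exactly 0
   at isolated points.  The value at points outside dom f is irrelevant (set to +oo). *)
Definition slope_on {M : MetricSpace} (S : M -> Prop) (f : ERfun M) (x : M) : Rbar :=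
  match f x with
  | Some a =>
      Rbar_glb (fun s => exists delta : R, 0 < delta /\
        s = Rbar_lub (fun t => t = Finite 0 \/
              exists y : M, S y /\ y <> x /\ mdist M x y < delta /\
                t = Finite (pos_diff a (f y) / mdist M x y)))
  | None => p_infty
  end.

Definition slope {M : MetricSpace} (f : ERfun M) (x : M) : Rbar :=
  slope_on (fun _ => True) f x.

From Stdlib Require Import Reals Lra Classical.
From Coquelicot Require Import Coquelicot.
Open Scope R_scope.

(* Restricting the competitors y to a subset can only lower the slope, so
   |grad f_1|(x) <= |grad f|(x).  For the converse pick a real c with
   |grad g|(x) < c < |grad f|(x); on a small ball B(x, d0) the increments of
   g satisfy [g x - g y]^+ <= c rho(x,y).  If some y in that ball has
   [f x - f y]^+ > c rho(x,y), then f drops more than g between x and y, so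
   f y - g y < f x - g x <= lambda, i.e. y lies again in M_1.  Hence on every
   ball of radius <= d0 the supremum of the difference quotients of f over M
   is bounded by c or by the same supremum over M_1; the first alternative is
   impossible since c < |grad f|(x), and taking the infimum over radii gives
   |grad f|(x) <= |grad f_1|(x). *)

Lemma Rbar_lub_correct (E : Rbar -> Prop) : Rbar_is_lub E (Rbar_lub E).
Proof. unfold Rbar_lub; destruct (Rbar_ex_lub E); auto. Qed.

Lemma Rbar_glb_correct (E : Rbar -> Prop) : Rbar_is_glb E (Rbar_glb E).
Proof. unfold Rbar_glb; destruct (Rbar_ex_glb E); auto. Qed.

Lemma Rbar_glb_lt (E : Rbar -> Prop) (c : Rbar) :
  Rbar_lt (Rbar_glb E) c -> exists s, E s /\ Rbar_lt s c.
Proof.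
  intros Hlt; apply NNPP; intros Hnone.
  apply (Rbar_lt_not_le _ _ Hlt), (proj2 (Rbar_glb_correct E)).
  intros s Hs; apply Rbar_not_lt_le; intros Hsc; eauto.
Qed.

Lemma Rbar_between (u v : Rbar) :
  Rbar_le (Finite 0) u -> Rbar_lt u v ->
  exists c : R, 0 <= c /\ Rbar_lt u (Finite c) /\ Rbar_lt (Finite c) v.
Proof.
  destruct u as [u| |], v as [v| |]; simpl; try tauto; intros Hu Huv.
  - exists ((u + v) / 2); lra.
  - exists (u + 1); lra.
Qed.

Lemma mdist_pos (M : MetricSpace) (x y : M) : y <> x -> 0 < mdist M x y.
Proof.
  intros Hyx; destruct (mdist_ge0 M x y) as [Hpos|Hzero]; auto.
  exfalso; apply Hyx; symmetry; apply (mdist_eq0 M); auto.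
Qed.

Section LocalSlope.

Variables (M : MetricSpace) (x : M).

Definition quot_sup (S : M -> Prop) (h : ERfun M) (a delta : R) : Rbar :=
  Rbar_lub (fun t => t = Finite 0 \/
    exists y : M, S y /\ y <> x /\ mdist M x y < delta /\
      t = Finite (pos_diff a (h y) / mdist M x y)).

Definition local_slope (S : M -> Prop) (h : ERfun M) (a : R) : Rbar :=
  Rbar_glb (fun s => exists delta : R, 0 < delta /\ s = quot_sup S h a delta).

Lemma slope_on_local_slope (S : M -> Prop) (h : ERfun M) (a : R) :
  h x = Some a -> slope_on S h x = local_slope S h a.
Proof. intros Hx; unfold slope_on; rewrite Hx; reflexivity. Qed.

Variables (h : ERfun M) (a : R).

Lemma quot_sup_mono (S T : M -> Prop) (d d' : R) :
  (forall y, S y -> T y) -> d <= d' ->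
  Rbar_le (quot_sup S h a d) (quot_sup T h a d').
Proof.
  intros HST Hdd'; apply Rbar_lub_subset.
  intros t [Ht|[y (Hy & Hyx & Hyd & Ht)]]; [left; exact Ht|].
  right; exists y; repeat split; auto; lra.
Qed.

Lemma quot_sup_ge (S : M -> Prop) (d : R) (y : M) :
  S y -> y <> x -> mdist M x y < d ->
  Rbar_le (Finite (pos_diff a (h y) / mdist M x y)) (quot_sup S h a d).
Proof. intros; apply Rbar_lub_correct; right; exists y; auto. Qed.

Lemma quot_sup_dichotomy (S T : M -> Prop) (d c : R) :
  0 <= c ->
  (forall y, T y -> y <> x -> mdist M x y < d ->
     c < pos_diff a (h y) / mdist M x y -> S y) ->
  Rbar_le (quot_sup T h a d) (quot_sup S h a d) \/
  Rbar_le (quot_sup T h a d) (Finite c).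
Proof.
  intros Hc Hsteep.
  assert (Hbound : forall l, Rbar_le (Finite 0) l ->
    (forall y, T y -> y <> x -> mdist M x y < d ->
       Rbar_le (Finite (pos_diff a (h y) / mdist M x y)) l) ->
    Rbar_le (quot_sup T h a d) l).
  { intros l Hl0 Hl; apply Rbar_lub_correct.
    intros t [->|[y (Hy & Hyx & Hyd & ->)]]; auto. }
  destruct (Rbar_lt_le_dec (quot_sup S h a d) (Finite c)) as [HSc|HcS].
  - right; apply Hbound; [simpl; lra|]; intros y Hy Hyx Hyd.
    destruct (Rle_lt_dec (pos_diff a (h y) / mdist M x y) c) as [Hq|Hq]; [exact Hq|].
    apply Rbar_lt_le, (Rbar_le_lt_trans _ _ _ (quot_sup_ge S d y (Hsteep y Hy Hyx Hyd Hq) Hyx Hyd) HSc).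
  - left; apply Hbound.
    + apply (Rbar_le_trans _ (Finite c)); [simpl; lra|exact HcS].
    + intros y Hy Hyx Hyd.
      destruct (Rle_lt_dec (pos_diff a (h y) / mdist M x y) c) as [Hq|Hq].
      * apply (Rbar_le_trans _ (Finite c)); [exact Hq|exact HcS].
      * exact (quot_sup_ge S d y (Hsteep y Hy Hyx Hyd Hq) Hyx Hyd).
Qed.

Lemma local_slope_le (S : M -> Prop) (d : R) :
  0 < d -> Rbar_le (local_slope S h a) (quot_sup S h a d).
Proof. intros Hd; apply Rbar_glb_correct; eauto. Qed.

Lemma local_slope_ge (S : M -> Prop) (l : Rbar) :
  (forall d, 0 < d -> Rbar_le l (quot_sup S h a d)) ->
  Rbar_le l (local_slope S h a).
Proof. intros Hl; apply Rbar_glb_correct; intros s [d [Hd ->]]; auto. Qed.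

Lemma local_slope_lt (S : M -> Prop) (c : Rbar) :
  Rbar_lt (local_slope S h a) c ->
  exists d, 0 < d /\ Rbar_lt (quot_sup S h a d) c.
Proof. intros Hlt; destruct (Rbar_glb_lt _ _ Hlt) as [s [[d [Hd ->]] Hs]]; eauto. Qed.

Lemma local_slope_ge0 (S : M -> Prop) : Rbar_le (Finite 0) (local_slope S h a).
Proof. apply local_slope_ge; intros d Hd; apply Rbar_lub_correct; left; reflexivity. Qed.

Lemma local_slope_mono (S T : M -> Prop) :
  (forall y, S y -> T y) -> Rbar_le (local_slope S h a) (local_slope T h a).
Proof.
  intros HST; apply local_slope_ge; intros d Hd.
  apply (Rbar_le_trans _ (quot_sup S h a d)); [apply local_slope_le; exact Hd|].
  apply quot_sup_mono; [exact HST|lra].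
Qed.

End LocalSlope.

Lemma sublevel_of_steeper_descent (M : MetricSpace) (f g : ERfun M)
    (lam a b e : R) (y : M) :
  a - b <= lam -> 0 <= e ->
  e < pos_diff a (f y) -> pos_diff b (g y) <= e -> sublevel f g lam y.
Proof.
  intros Hab He Hf Hg; unfold sublevel.
  destruct (f y) as [v|]; simpl in Hf; [|lra].
  destruct (g y) as [w|]; [|exact I]; simpl in Hg.
  pose proof (Rmax_r 0 (b - w)).
  destruct (Rle_lt_dec (a - v) 0); [rewrite Rmax_left in Hf by lra; lra|].
  rewrite Rmax_right in Hf by lra; lra.
Qed.

Lemma steep_points_in_sublevel (M : MetricSpace) (f g : ERfun M)
    (lam a b c d0 : R) (x : M) :
  a - b <= lam -> 0 <= c ->
  Rbar_lt (quot_sup M x (fun _ => True) g b d0) (Finite c) ->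
  forall y, y <> x -> mdist M x y < d0 ->
    c < pos_diff a (f y) / mdist M x y -> sublevel f g lam y.
Proof.
  intros Hab Hc Hg y Hyx Hyd Hq.
  pose proof (mdist_pos M x y Hyx) as Hr.
  assert (Hgq : pos_diff b (g y) / mdist M x y < c).
  { exact (Rbar_le_lt_trans _ _ _ (quot_sup_ge M x g b _ d0 y I Hyx Hyd) Hg). }
  apply (sublevel_of_steeper_descent M f g lam a b (c * mdist M x y) y); auto.
  - apply Rmult_le_pos; lra.
  - apply Rmult_lt_reg_r with (/ mdist M x y); [apply Rinv_0_lt_compat; lra|].
    rewrite Rmult_assoc, Rinv_r; lra.
  - apply Rmult_le_reg_r with (/ mdist M x y); [apply Rinv_0_lt_compat; lra|].
    rewrite Rmult_assoc, Rinv_r; lra.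
Qed.

Theorem lemma2p4 (M : MetricSpace) (f g : ERfun M) (lam : R)
  (Hne : exists z : M, sublevel f g lam z /\ dom f z /\ dom g z)
  (x : M) (HxM1 : sublevel f g lam x) (Hxg : dom g x)
  (Hgt : Rbar_lt (slope g x) (slope f x)) :
  slope_on (sublevel f g lam) f x = slope f x.
Proof.
  unfold slope, dom in *; unfold sublevel in HxM1.
  destruct (f x) as [a|] eqn:Hfx; [|contradiction].
  destruct (g x) as [b|] eqn:Hgx; [|congruence].
  rewrite !(slope_on_local_slope M x _ f a Hfx).
  rewrite (slope_on_local_slope M x _ f a Hfx), (slope_on_local_slope M x _ g b Hgx) in Hgt.
  destruct (Rbar_between _ _ (local_slope_ge0 M x g b _) Hgt) as (c & Hc & HcG & HcF).
  destruct (local_slope_lt M x g b _ _ HcG) as (d0 & Hd0 & Hgd0).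
  apply Rbar_le_antisym; [apply local_slope_mono; auto|].
  apply local_slope_ge; intros d Hd.
  assert (Hd' : 0 < Rmin d d0) by (apply Rmin_pos; assumption).
  pose proof (local_slope_le M x f a (fun _ => True) _ Hd') as HF.
  destruct (quot_sup_dichotomy M x f a (sublevel f g lam) (fun _ => True) (Rmin d d0) c Hc)
    as [Hle|Hle].
  - intros y _ Hyx Hyd.
    apply (steep_points_in_sublevel M f g lam a b c d0 x); auto.
    apply (Rlt_le_trans _ _ _ Hyd), Rmin_r.
  - apply (Rbar_le_trans _ _ _ HF), (Rbar_le_trans _ _ _ Hle), quot_sup_mono; auto.
    apply Rmin_l.
  - exfalso; apply (Rbar_lt_not_le _ _ HcF), (Rbar_le_trans _ _ _ HF Hle).
Qed.
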